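(* With the notation of the context, $\lim_{t\uparrow\tau}T_t=+\infty$ $\mathbb Q$-almost surely.
   Context: Fix $\gamma>0$, $D>0$. On a probability space $(\Omega_+,\mathcal F_+,\mathbb Q)$ let $x_-,y_-$ be real random variables with $x_->0$ a.s., and let $B$ be a standard Brownian motion independent of $(x_-,y_-)$. Define $\hat y(t)=e^{-\gamma t}y_-+\sqrt{2D}\int_0^t e^{-\gamma(t-s)}\,dB_s$, $t\ge0$, the random time $\tau=\inf\{s\ge0:\int_0^s\hat y(r)\,dr=x_-^{-3}/3\}$ (which is finite $\mathbb Q$-a.s.), the process $\hat x(t)=\big[x_-^{-3}-3\int_0^t\hat y(s)\,ds\big]^{-1/3}$ for $t<\tau$, and $T_t=\int_0^t\hat x(s)^4\,ds$ for $t<\tau$, $T_t=+\infty$ for $t\ge\tau$. *)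

From Stdlib Require List.
From HB Require Import structures.
From mathcomp Require Import all_boot all_order all_algebra.
From mathcomp Require Import all_classical all_reals all_analysis.
Set Implicit Arguments. Unset Strict Implicit. Unset Printing Implicit Defensive.
Import Order.TTheory GRing.Theory Num.Theory.
Import numFieldNormedType.Exports.
Local Open Scope classical_set_scope.
Local Open Scope ring_scope.

Section defs.
Context {R : realType} {d : measure_display} {T : measurableType d}.

Definition fd_event (I : Type) (X : I -> T -> R) (s : seq (I * set R)) : set T :=
  [set w | forall p, List.In p s -> p.2 (X p.1 w)].

(** independence of the sigma-algebras generated by two families of real
    random variables, expressed on the generating pi-systems of
    finite-dimensional cylinder events *)
Definition indep_families (P : probability T R) (I J : Type)
    (X : I -> T -> R) (Y : J -> T -> R) : Prop :=
  forall (s1 : seq (I * set R)) (s2 : seq (J * set R)),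
    (forall p, List.In p s1 -> measurable p.2) ->
    (forall p, List.In p s2 -> measurable p.2) ->
    (P (fd_event X s1 `&` fd_event Y s2) = P (fd_event X s1) * P (fd_event Y s2))%E.

Definition is_brownian_motion (P : probability T R) (B : R -> T -> R) : Prop :=
  [/\ (forall t, 0 <= t -> measurable_fun setT (B t)),
      (forall w, B 0 w = 0),
      (forall w, {within `[0, +oo[, continuous (fun t => B t w)}),
      (forall s t, 0 <= s < t -> forall A : set R, measurable A ->
          P ((fun w => B t w - B s w) @^-1` A) = normal_prob 0 (Num.sqrt (t - s)) A) &
      (forall s t, 0 <= s <= t ->
          indep_families P (fun u : {u : R | 0 <= u <= s} => B (proj1_sig u))
                           (fun _ : unit => fun w => B t w - B s w))].

Variables (gamma D : R) (xm ym : T -> R) (B : R -> T -> R).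

(** Wiener integral \int_0^t e^{-gamma (t-s)} dB_s, defined pathwise by
    integration by parts (deterministic C^1 integrand):
    B_t - gamma \int_0^t e^{-gamma (t-s)} B_s ds *)
Definition wiener_OU (w : T) (t : R) : R :=
  B t w - gamma * Rintegral lebesgue_measure `[0, t]
                    (fun s => expR (- gamma * (t - s)) * B s w).

Definition yhat (w : T) (t : R) : R :=
  expR (- gamma * t) * ym w + Num.sqrt (2 * D) * wiener_OU w t.

Definition Yint (w : T) (t : R) : R :=
  Rintegral lebesgue_measure `[0, t] (yhat w).

Definition tau (w : T) : \bar R :=
  ereal_inf [set r%:E | r in [set r | 0 <= r /\ Yint w r = (xm w) ^- 3 / 3]].

Definition xhat (w : T) (t : R) : R :=
  powR ((xm w) ^- 3 - 3 * Yint w t) (- 3^-1).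

Definition Ttime (w : T) (t : R) : \bar R :=
  if (t%:E < tau w)%E
  then (Rintegral lebesgue_measure `[0, t] (fun s => xhat w s ^+ 4))%:E
  else +oo%E.

End defs.

From HB Require Import structures.
From mathcomp Require Import all_boot all_order all_algebra.
From mathcomp Require Import all_classical all_reals all_analysis.
From mathcomp Require Import ring lra.
Import Order.TTheory GRing.Theory Num.Theory.
Import numFieldNormedType.Exports.
Import Num.Def.
Set Implicit Arguments. Unset Strict Implicit. Unset Printing Implicit Defensive.
Local Open Scope classical_set_scope.
Local Open Scope ring_scope.

(* The statement holds pathwise; only the continuity of the Brownian paths is
   used.  On a fixed path yhat is continuous, so its primitive Y is Lipschitz on
   compact intervals.  Hence the first time tau at which Y reaches
   c = x_-^{-3}/3 is positive and attained, Y tau = c, and for s < tau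
     xhat(s)^{-3} = x_-^{-3} - 3 Y s = 3 (Y tau - Y s) <= 3 M (tau - s).
   Thus xhat^4 >= (3 M (tau - s))^{-4/3}, which is not integrable up to tau:
   already the interval [2t - tau, t] contributes a multiple of (tau - t)^{-1/3}. *)

Section real_facts.
Context {R : realType}.
Local Notation mu := (@lebesgue_measure R).

Lemma le0_ger_powR (p u v : R) : p <= 0 -> 0 < u -> u <= v ->
  powR v p <= powR u p.
Proof.
move=> p0 u0 uv; have v0 := lt_le_trans u0 uv.
rewrite -(opprK p) powRN [u `^ _]powRN lef_pV2 ?posrE ?powR_gt0//.
by apply: (@ge0_ler_powR R (- p)); rewrite ?nnegrE ?oppr_ge0// ltW.
Qed.

Lemma powR_Ncbrt_cube (v : R) : 0 <= v -> powR v (- 3^-1) ^+ 3 = v^-1.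
Proof.
move=> v0; rewrite -powR_mulrn ?powR_ge0// -powRrM.
by rewrite mulNr mulVf ?powR_inv1.
Qed.

Lemma powR_Ncbrt_invcube (A : R) : 0 < A -> powR (A ^- 3) (- 3^-1) = A.
Proof.
move=> A0; rewrite -powR_invn ?ltW// -powRrM.
by rewrite mulNr mulrN opprK mulfV ?powRr1 ?ltW.
Qed.

Lemma powR_Ncbrt_tail (u : R) : 0 < u -> powR u (- 3^-1) ^+ 4 * u = powR u (- 3^-1).
Proof.
by move=> u0; rewrite exprSr powR_Ncbrt_cube ?ltW// mulrAC mulVf ?mul1r ?gt_eqF.
Qed.

Lemma continuous_powR (p a : R) : 0 < a -> {for a, continuous (@powR R ^~ p)}.
Proof.
move=> a0; apply: differentiable_continuous; apply/derivable1_diffP.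
by apply: derivable_powR; rewrite in_itv /= a0.
Qed.

Lemma continuous_itv_integrable (g : R -> R) a b :
  {within `[a, b], continuous g} -> mu.-integrable `[a, b] (EFin \o g).
Proof.
by move=> cg; apply: continuous_compact_integrable => //; exact: segment_compact.
Qed.

Lemma continuous_itv_oc_integrable (g : R -> R) a b :
  {within `[a, b], continuous g} -> mu.-integrable `]a, b] (EFin \o g).
Proof.
move=> /continuous_itv_integrable ig; apply: integrableS ig => //.
exact: subset_itv_oc_cc.
Qed.

Lemma continuous_Rintegral_itv0 (g : R -> R) L : 0 <= L ->
  {within `[0, L], continuous g} ->
  {within `[0, L], continuous (fun t => Rintegral mu `[0, t] g)}.
Proof.
move=> L0 /continuous_itv_integrable ig.
exact: parameterized_integral_continuous.
Qed.

Lemma Rintegral_cst_itv_oc (k a b : R) : a <= b ->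
  Rintegral mu `]a, b] (fun=> k) = k * (b - a).
Proof.
move=> ab; rewrite Rintegral_cst//= lebesgue_measure_itv/= lte_fin.
by case: ltgtP ab => // -> _; rewrite subrr.
Qed.

Lemma continuous_itv_bounded (a b : R) (g : R -> R) : a <= b ->
  {within `[a, b], continuous g} ->
  exists2 M, 0 < M & forall s, a <= s -> s <= b -> `|g s| <= M.
Proof.
move=> ab cg.
have [c _ cmax] := @EVT_max R (fun s => `|g s|) a b ab (fun s => cvg_norm (cg s)).
exists (`|g c| + 1) => [|s aS sb]; first by rewrite ltr_pwDr.
by rewrite (le_trans (cmax s _)) ?lerDl// in_itv/= aS sb.
Qed.

Lemma Rintegral_itv0_lipschitz (g : R -> R) L : 0 <= L ->
  {within `[0, L], continuous g} ->
  exists2 M, 0 < M & forall s s', 0 <= s -> s <= s' -> s' <= L ->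
    `|Rintegral mu `[0, s'] g - Rintegral mu `[0, s] g| <= M * (s' - s).
Proof.
move=> L0 cg; have [M M0 gM] := continuous_itv_bounded L0 cg.
exists M => // s s' s0 ss' s'L.
have cgs : {within `[s, s'], continuous g}.
  by apply: continuous_subspaceW cg; apply: subset_itv; rewrite bnd_simp.
have ig : mu.-integrable `[0, s'] (EFin \o g).
  apply/continuous_itv_integrable/(continuous_subspaceW _ cg).
  by apply: subset_itv; rewrite bnd_simp.
rewrite (Rintegral_itvB ig) ?bnd_simp// -Rintegral_cst_itv_oc//.
apply: le_trans (le_normr_Rintegral _ _) _ => //.
  exact: continuous_itv_oc_integrable.
apply: le_Rintegral => //.
- by apply: continuous_itv_oc_integrable => u; apply: cvg_norm; exact: cgs.
- by apply: continuous_itv_oc_integrable => u; exact: cvg_cst.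
- move=> u; rewrite /= in_itv/= => /andP[su us'].
  by apply: gM; [exact: le_trans s0 (ltW su)|exact: le_trans us' s'L].
Qed.

Lemma Rintegral_itv0_ge_tail (f : R -> R) (a t k : R) : 0 <= a -> a <= t ->
  {within `[0, t], continuous f} -> (forall s, 0 <= s -> s <= a -> 0 <= f s) ->
  (forall s, a < s -> s <= t -> k <= f s) ->
  k * (t - a) <= Rintegral mu `[0, t] f.
Proof.
move=> a0 at_ cf f0 kf; have fi := continuous_itv_integrable cf.
have -> : Rintegral mu `[0, t] f = Rintegral mu `[0, a] f + Rintegral mu `]a, t] f.
  by rewrite -(Rintegral_itvB fi) ?bnd_simp// addrC subrK.
rewrite -[_ * _]add0r; apply: lerD.
  by apply: Rintegral_ge0 => s; rewrite /= in_itv/= => /andP[]; exact: f0.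
rewrite -Rintegral_cst_itv_oc//; apply: le_Rintegral => //.
- by apply: continuous_itv_oc_integrable => u; exact: cvg_cst.
- by apply: integrableS fi => //; apply: subset_itv; rewrite bnd_simp.
- by move=> s; rewrite /= in_itv/= => /andP[]; exact: kf.
Qed.

End real_facts.

Section hitting_time.
Context {R : realType}.

(* [tau] of the statement is [hitting_time (Yint ..) (xm w ^- 3 / 3)] by conversion. *)
Definition hitting_time (f : R -> R) (c : R) : \bar R :=
  ereal_inf [set r%:E | r in [set r | 0 <= r /\ f r = c]].

Lemma hitting_time_ge0 (f : R -> R) c : (0 <= hitting_time f c)%E.
Proof. by apply: le_ereal_inf_tmp => _ [s [s0 _] <-]; rewrite lee_fin. Qed.

Variables (f : R -> R) (c r : R).
Hypothesis fr : hitting_time f c = r%:E.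

Lemma hitting_time_le s : 0 <= s -> f s = c -> r <= s.
Proof. by move=> s0 fs; rewrite -lee_fin -fr; apply: ereal_inf_lbound; exists s. Qed.

Lemma hitting_time_approx e : 0 < e -> exists s, [/\ 0 <= s, f s = c & s < r + e].
Proof.
move=> e0; have rfin : hitting_time f c \is a fin_num by rewrite fr.
have [_ [s [s0 fs] <-]] := lb_ereal_inf_adherent e0 rfin.
by rewrite -/(hitting_time f c) fr -EFinD lte_fin => sr; exists s.
Qed.

Lemma hitting_time_attained M : 0 < M ->
  (forall s, r <= s -> s <= r + 1 -> `|f s - f r| <= M * (s - r)) -> f r = c.
Proof.
move=> M0 fM; apply/eqP; rewrite -subr_eq0 -normr_le0.
apply/ler_addgt0Pr => e e0; rewrite add0r.
pose e' := minr 1 (e / M).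
have e'0 : 0 < e' by rewrite lt_min ltr01 divr_gt0.
have [e'1 e'e] : e' <= 1 /\ e' <= e / M by split; rewrite ge_min lexx ?orbT.
have [s [s0 fs sr]] := hitting_time_approx e'0.
have rs := hitting_time_le s0 fs.
rewrite -fs distrC; apply: le_trans (fM s rs _) _; first lra.
have -> : e = M * (e / M) by rewrite mulrCA mulfV ?mulr1 ?gt_eqF.
rewrite ler_pM2l //; lra.
Qed.

End hitting_time.

Section integral_hitting_time.
Context {R : realType}.
Local Notation mu := (@lebesgue_measure R).
Variables (g : R -> R) (b r : R).
Hypothesis cg : forall L, 0 <= L -> {within `[0, L], continuous g}.
Hypothesis b0 : 0 < b.
Let G t := Rintegral mu `[0, t] g.
Hypothesis Gr : hitting_time G (b / 3) = r%:E.

Let G0 : G 0 = 0.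
Proof. by rewrite /G set_itv1 Rintegral_set1. Qed.

Let r0 : 0 <= r.
Proof. by rewrite -lee_fin -Gr hitting_time_ge0. Qed.

Lemma integral_at_hitting_time : G r = b / 3.
Proof.
have [M M0 GM] := Rintegral_itv0_lipschitz (addr_ge0 r0 ler01) (cg (addr_ge0 r0 ler01)).
by apply: (hitting_time_attained Gr M0) => s rs sr1; apply: GM.
Qed.

Lemma hitting_time_gt0 : 0 < r.
Proof.
rewrite lt_neqAle r0 andbT; apply/eqP => r0'.
have := integral_at_hitting_time; rewrite -r0' G0 => /eqP.
by rewrite eq_sym mulf_eq0 invr_eq0 pnatr_eq0 gt_eqF.
Qed.

Lemma integral_lt_before_hitting s : 0 <= s -> s < r -> G s < b / 3.
Proof.
move=> s0 sr; rewrite ltNge; apply/negP => bs.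
have Gc : {within `[0, s], continuous G} by exact: continuous_Rintegral_itv0 (cg s0).
have [u uin Gu] : exists2 u, u \in `[0, s] & G u = b / 3.
  by apply: IVT s0 Gc _; rewrite G0 ge_min le_max bs orbT andbT divr_ge0 // ltW.
move: uin; rewrite in_itv/= => /andP[u0 us].
by have := hitting_time_le Gr u0 Gu; lra.
Qed.

Lemma hitting_gap_le :
  exists2 M, 0 < M & forall s, 0 <= s -> s <= r -> b - 3 * G s <= M * (r - s).
Proof.
have [M M0 GM] := Rintegral_itv0_lipschitz r0 (cg r0).
exists (3 * M) => [|s s0 sr]; first by rewrite mulr_gt0.
have -> : b - 3 * G s = 3 * (G r - G s).
  by rewrite integral_at_hitting_time mulrBr mulrCA mulfV ?mulr1 ?pnatr_eq0.
by rewrite -mulrA ler_pM2l// (le_trans (ler_norm _)) ?GM.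
Qed.

Let base_gt0 s : 0 <= s -> s < r -> 0 < b - 3 * G s.
Proof.
move=> s0 sr; have := integral_lt_before_hitting s0 sr.
by rewrite subr_gt0 -(ltr_pM2l (ltr0n _ 3)) mulrCA mulfV ?mulr1 ?pnatr_eq0.
Qed.

Lemma continuous_hitting_integrand t : 0 <= t -> t < r ->
  {within `[0, t], continuous (fun s => powR (b - 3 * G s) (- 3^-1) ^+ 4)}.
Proof.
move=> t0 tr; have Gc := continuous_Rintegral_itv0 t0 (cg t0).
have basec : {within `[0, t], continuous (fun s => b - 3 * G s)}.
  by move=> s; apply: cvgB; [exact: cvg_cst|apply: cvgM; [exact: cvg_cst|exact: Gc]].
apply: (@within_continuous_comp _ _ _ _ _ (fun v => powR v (- 3^-1) ^+ 4) _ basec).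
move=> _ /[!inE] -[s + <-] => /= /[!in_itv] /andP[s0 st].
apply: (@continuous_comp _ _ _ (@powR R ^~ (- 3^-1)) (fun z => z ^+ 4)).
  exact/continuous_powR/base_gt0/(le_lt_trans st tr).
exact: exprn_continuous.
Qed.

Lemma Rintegral_hitting_integrand_ge M t : 0 < M ->
  (forall s, 0 <= s -> s <= r -> b - 3 * G s <= M * (r - s)) ->
  r / 2 <= t -> t < r ->
  powR (2 * M * (r - t)) (- 3^-1) / (2 * M) <=
    Rintegral mu `[0, t] (fun s => powR (b - 3 * G s) (- 3^-1) ^+ 4).
Proof.
move=> M0 gap rt tr; have t0 : 0 <= t by lra.
pose a := 2 * t - r; pose u := 2 * M * (r - t); pose k := powR u (- 3^-1).
have u0 : 0 < u by rewrite !mulr_gt0// subr_gt0.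
have tail s : a < s -> s <= t -> k ^+ 4 <= powR (b - 3 * G s) (- 3^-1) ^+ 4.
  move=> aS st; have s0 : 0 <= s by rewrite /a in aS; lra.
  have sr := le_lt_trans st tr.
  apply: lerXn2r; rewrite ?nnegrE ?powR_ge0//.
  apply: le0_ger_powR; rewrite ?base_gt0//.
  apply: le_trans (gap s s0 (ltW sr)) _.
  by rewrite /u -mulrA mulrCA ler_pM2l//; rewrite /a in aS; lra.
have F0 s : 0 <= s -> s <= a -> 0 <= powR (b - 3 * G s) (- 3^-1) ^+ 4.
  by move=> _ _; rewrite exprn_ge0// powR_ge0.
have a0 : 0 <= a by rewrite /a; lra.
have at_ : a <= t by rewrite /a; lra.
apply: le_trans (Rintegral_itv0_ge_tail a0 at_
  (continuous_hitting_integrand t0 tr) F0 tail).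
have -> : t - a = u / (2 * M) by rewrite /a /u; field; rewrite gt_eqF.
by rewrite mulrA powR_Ncbrt_tail.
Qed.

Theorem Rintegral_hitting_integrand_cvgy :
  (Rintegral mu `[0, t] (fun s => powR (b - 3 * G s) (- 3^-1) ^+ 4))%:E
    @[t --> r^'-] --> +oo%E.
Proof.
have r_gt0 := hitting_time_gt0; have [M M0 gap] := hitting_gap_le.
apply/cvgeyPge => A.
pose C := 2 * M * (`|A| + 1).
have C0 : 0 < C by rewrite !mulr_gt0// ltr_pwDr.
pose del := minr (r / 2) (C ^- 3 / (2 * M)).
have del0 : 0 < del by rewrite lt_min !divr_gt0 ?invr_gt0 ?exprn_gt0 ?mulr_gt0.
have [del1 del2] : del <= r / 2 /\ del <= C ^- 3 / (2 * M).
  by split; rewrite ge_min lexx ?orbT.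
near=> t.
have tr : t < r by near: t; exact: nbhs_left_lt.
have rt : r - del < t by near: t; apply: nbhs_left_gt; rewrite ltrBlDr ltrDl.
rewrite lee_fin; apply: le_trans (Rintegral_hitting_integrand_ge M0 gap _ tr); last lra.
have Ck : C <= powR (2 * M * (r - t)) (- 3^-1).
  rewrite -(powR_Ncbrt_invcube C0); apply: le0_ger_powR; rewrite ?mulr_gt0 ?subr_gt0//.
  rewrite -[C ^- 3](mulfVK (_ : 2 * M != 0)) ?gt_eqF ?mulr_gt0// [_ / _ * _]mulrC.
  by rewrite ler_pM2l ?mulr_gt0//; lra.
apply: (@le_trans _ _ (C / (2 * M))); last by rewrite ler_pM2r ?invr_gt0 ?mulr_gt0.
have -> : C / (2 * M) = `|A| + 1 by rewrite /C; field; rewrite gt_eqF.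
by rewrite (le_trans (ler_norm A)) ?lerDl.
Unshelve. all: by end_near.
Qed.

End integral_hitting_time.

Lemma continuous_yhat {R : realType} {d : measure_display} {T : measurableType d}
    (gamma D : R) (ym : T -> R) (B : R -> T -> R) (w : T) (L : R) :
  {within `[0, +oo[, continuous (fun t => B t w)} -> 0 <= L ->
  {within `[0, L], continuous (yhat gamma D ym B w)}.
Proof.
move=> Bc L0.
have expc (k : R) : continuous (fun t : R => expR (k * t)).
  move=> t; apply: continuous_comp; last exact: continuous_expR.
  by apply: cvgM; [exact: cvg_cst|exact: cvg_id].
have BcL : {within `[0, L], continuous (fun t => B t w)}.
  by apply: continuous_subspaceW Bc; apply: subset_itv; rewrite bnd_simp.
pose h s := expR (gamma * s) * B s w.
have hc : {within `[0, L], continuous h}.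
  by move=> s; apply: cvgM; [exact: continuous_subspaceT|exact: BcL].
(* Pulling [expR (- gamma * t)] out of the time integral of [wiener_OU] leaves
   an integrand that no longer depends on [t]. *)
apply: (@subspace_eq_continuous _ _ _ (fun t => expR (- gamma * t) * ym w +
    Num.sqrt (2 * D) * (B t w -
      gamma * (expR (- gamma * t) * Rintegral lebesgue_measure `[0, t] h)))).
- move=> t; rewrite inE /= in_itv /= => /andP[t0 tL].
  rewrite /yhat /wiener_OU -RintegralZl//; last first.
    by apply/continuous_itv_integrable/(continuous_subspaceW _ hc)/subset_itv; rewrite bnd_simp.
  congr (_ + _ * (_ - _ * _)); apply: eq_Rintegral => s _.
  by rewrite /h mulrA -expRD; congr (expR _ * _); ring.
- move=> t; apply: cvgD.
    by apply: cvgM; [exact: continuous_subspaceT|exact: cvg_cst].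
  apply: cvgM; first exact: cvg_cst.
  apply: cvgB; first exact: BcL.
  apply: cvgM; first exact: cvg_cst.
  apply: cvgM; first exact: continuous_subspaceT.
  exact: continuous_Rintegral_itv0 L0 hc t.
Qed.

Theorem lemma2 (R : realType) (d : measure_display) (T : measurableType d)
    (P : probability T R) (gamma D : R) (xm ym : T -> R) (B : R -> T -> R) :
  0 < gamma -> 0 < D ->
  measurable_fun setT xm -> measurable_fun setT ym ->
  {ae P, forall w, 0 < xm w} ->
  is_brownian_motion P B ->
  indep_families P (fun i : bool => if i then xm else ym)
                   (fun t : {t : R | 0 <= t} => B (proj1_sig t)) ->
  {ae P, forall w, (tau gamma D xm ym B w < +oo)%E} ->
  {ae P, forall w, exists r : R, tau gamma D xm ym B w = r%:E /\
      (Ttime gamma D xm ym B w t @[t --> r^'-] --> +oo%E)}.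
Proof.
move=> _ _ _ _ xm_gt0 [_ _ Bc _ _] _ tau_fin.
apply: filterS2 xm_gt0 tau_fin => w xw tw.
have tau_fin_num : tau gamma D xm ym B w \is a fin_num.
  by rewrite ge0_fin_numE// hitting_time_ge0.
exists (fine (tau gamma D xm ym B w)); split; first by rewrite fineK.
have b0 : 0 < xm w ^- 3 by rewrite invr_gt0 exprn_gt0.
have yhat_cont L : 0 <= L -> {within `[0, L], continuous (yhat gamma D ym B w)}.
  exact: continuous_yhat (Bc w).
have := Rintegral_hitting_integrand_cvgy yhat_cont b0 (esym (fineK tau_fin_num)).
apply: cvg_trans; apply: near_eq_cvg; near=> t.
have tr : t < fine (tau gamma D xm ym B w) by near: t; exact: nbhs_left_lt.
by rewrite /Ttime -[X in (_ < X)%E](fineK tau_fin_num) lte_fin tr.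
Unshelve. all: by end_near.
Qed.
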